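(* There exist a Bayes-adaptive MDP $M^+$ (built from a task distribution $p(\kappa)$ over finite-horizon MDPs) and task-dependent behavior policies $[\mu]=p(\mu\mid\kappa)$ such that, for every batch-constrained meta-policy $\pi^+$, the transition-reward distribution shift between $\mathbb{P}_{M^+,[\mu]}$ and $\mathbb{P}_{M^+,\pi^+}$ occurs; that is, there is a pair $(s_t^+,a_t)$ reached with positive probability when executing $\pi^+$ in $M^+$ such that $$\mathbb{P}_{M^+,[\mu]}(r_t,s_{t+1}\mid s_t^+,a_t)\neq \mathbb{P}_{M^+,\pi^+}(r_t,s_{t+1}\mid s_t^+,a_t)$$ for some $(r_t,s_{t+1})$.
   Context: Tasks: a distribution $p(\kappa)$ over tasks $\kappa$, each a finite-horizon MDP $(\mathcal S,\mathcal A,\mathcal R,H,P^\kappa,R^\kappa)$ with common finite state, action and reward spaces, horizon $H$, fixed initial state $s_0$, transition kernel $P^\kappa(s'\mid s,a)$ and reward distribution $R^\kappa(r\mid s,a)$ with rewards in $[0,1]$. An agent interacts with one sampled task for $N$ episodes, total horizon $H^+=NH$. A context $c_{:t}=\langle s_0,(a_0,r_0,s_1),\dots,(a_{t-1},r_{t-1},s_t)\rangle$ is the interaction history; the belief $b_t=p(\kappa\mid c_{:t})$ is the Bayesian posterior over tasks ($b_0=p(\kappa)$, and $b_{t+1}\propto \mathbb E_{\kappa\sim b_t}[R^\kappa(r_t\mid s_t,a_t)P^\kappa(s_{t+1}\mid s_t,a_t)]\,b_t$ in the usual Bayes sense). The Bayes-adaptive MDP (BAMDP) $M^+$ has hyper-states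 $s_t^+=(s_t,b_t)$, reward distribution $R^+(r\mid s^+,a)=\mathbb E_{\kappa\sim b}[R^\kappa(r\mid s,a)]$, state transition $P^+(s'\mid s^+,a)=\mathbb E_{\kappa\sim b}[P^\kappa(s'\mid s,a)]$, with the belief updated by Bayes' rule. A meta-policy $\pi^+$ maps hyper-states to distributions over actions. Task-dependent behavior policies $[\mu]=p(\mu\mid\kappa)$: a conditional distribution over policies $\mu:\mathcal S\to\Delta(\mathcal A)$ given the task. The offline dataset $\mathcal D^+$ consists of i.i.d. trajectories obtained by sampling $\kappa\sim p$, $\mu\sim p(\mu\mid\kappa)$ and executing $\mu$ in $\kappa$. The offline reward-transition distribution is $\mathbb P_{M^+,[\mu]}(r_t,s_{t+1}\mid s_t^+,a_t)\propto \mathbb E_{\kappa\sim p,\ \mu\sim p(\mu\mid\kappa)}\big[R^\kappa(r_t\mid s_t,a_t)P^\kappa(s_{t+1}\mid s_t,a_t)\, p_{M^+}(s_t^+\mid\kappa,\mu)\big]$, where $p_{M^+}(s_t^+\mid\kappa,\mu)$ is the probability that executing $\mu$ in $\kappa$ produces a context $c_{:t}$ ending in state $s_t$ with $p(\kappa\mid c_{:t})=b_t$. The online reward-transition distribution of a meta-policy is $\mathbb P_{M^+,\pi^+}(r_t,s_{t+1}\mid s_t^+,a_t)=R^+(r_t\mid s_t^+,a_t)P^+(s_{t+1}\mid s_t^+,a_t)$. A meta-policy $\pi^+$ is batch-constrained if $\pi^+(a\mid s^+)=0$ whenever the pair $(s^+,a)$ does not occur in the offline data (i.e. has zero probability under the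 offline collection by $[\mu]$). *)

From HB Require Import structures.
From mathcomp Require Import all_boot all_order all_algebra.
From mathcomp Require Import reals.

Unset Implicit Arguments.
Unset Strict Implicit.
Unset Printing Implicit Defensive.

Import Order.TTheory GRing.Theory Num.Theory.
Local Open Scope ring_scope.

Section BAMDP.
Variable R : realType.

Definition is_dist (T : finType) (d : T -> R) : Prop :=
  (forall x, 0 <= d x) /\ \sum_(x : T) d x = 1.

(* A task distribution over finite-horizon MDPs with common finite state,
   action and reward spaces; tasks are indexed by the finite type bK.
   [rval] gives the numerical value (in [0,1]) of each reward label. *)
Record bamdp := BAMDP {
  bS : finType; bA : finType; bRw : finType; bK : finType;
  rval : bRw -> R;
  hor : nat;
  neps : nat;
  s0 : bS;
  prior : bK -> R;
  Ptr : bK -> bS -> bA -> bS -> R;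
  Rdist : bK -> bS -> bA -> bRw -> R
}.

Arguments is_dist {T}.

Definition wf_bamdp (M : bamdp) : Prop :=
  (0 < hor M)%N /\ (0 < neps M)%N /\ injective (rval M) /\
  (forall r, 0 <= rval M r <= 1) /\ is_dist (prior M) /\
  (forall k s a, is_dist (Ptr M k s a)) /\ (forall k s a, is_dist (Rdist M k s a)).

Notation step M := (prod (prod (bA M) (bRw M)) (bS M)).

(* Next-state kernel at global time t: at the end of an episode
   (H divides t+1) the state is reset to s0, otherwise P^kappa. *)
Definition Kstep (M : bamdp) (k : bK M) (t : nat) (s : bS M) (a : bA M)
    (s' : bS M) : R :=
  if (hor M %| t.+1)%N then (s' == s0 M)%:R else Ptr M k s a s'.

Definition cur_state (M : bamdp) (c : seq (step M)) : bS M :=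
  last (s0 M) [seq x.2 | x <- c].

Fixpoint traj_prob (M : bamdp) (k : bK M) (pol : seq (step M) -> bA M -> R)
    (pre c : seq (step M)) : R :=
  match c with
  | [::] => 1
  | ((a, r), s') :: c' =>
      let s := cur_state M pre in
      pol pre a * Rdist M k s a r * Kstep M k (size pre) s a s' *
      traj_prob M k pol (rcons pre ((a, r), s')) c'
  end.

Definition lik (M : bamdp) (k : bK M) (c : seq (step M)) : R :=
  traj_prob M k (fun _ _ => 1) [::] c.

Definition belief (M : bamdp) (c : seq (step M)) : {ffun bK M -> R} :=
  [ffun k => prior M k * lik M k c / \sum_(k' : bK M) prior M k' * lik M k' c].

Definition Rplus (M : bamdp) (b : {ffun bK M -> R}) (s : bS M) (a : bA M)
    (r : bRw M) : R := \sum_(k : bK M) b k * Rdist M k s a r.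
Definition Pplus (M : bamdp) (t : nat) (b : {ffun bK M -> R}) (s : bS M)
    (a : bA M) (s' : bS M) : R := \sum_(k : bK M) b k * Kstep M k t s a s'.

Definition Pon (M : bamdp) (t : nat) (b : {ffun bK M -> R}) (s : bS M)
    (a : bA M) (r : bRw M) (s' : bS M) : R :=
  Rplus M b s a r * Pplus M t b s a s'.

(* Task-dependent behavior policies p(mu | kappa), finitely supported on
   the policies mu m (m : bM). *)
Record behavior (M : bamdp) := Behavior {
  bM : finType;
  mu : bM -> bS M -> bA M -> R;
  q : bK M -> bM -> R
}.

Arguments bM {M}.
Arguments mu {M}.
Arguments q {M}.

Definition wf_behavior (M : bamdp) (B : behavior M) : Prop :=
  (forall k, is_dist (q B k)) /\ (forall m s, is_dist (mu B m s)).

Definition beh_pol (M : bamdp) (B : behavior M) (m : bM B) :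
    seq (step M) -> bA M -> R := fun pre a => mu B m (cur_state M pre) a.

Definition occ (M : bamdp) (k : bK M) (pol : seq (step M) -> bA M -> R)
    (t : nat) (s : bS M) (b : {ffun bK M -> R}) : R :=
  \sum_(c : t.-tuple (step M) | (cur_state M c == s) && (belief M c == b))
     traj_prob M k pol [::] c.

Definition offline_occurs (M : bamdp) (B : behavior M) (t : nat) (s : bS M)
    (b : {ffun bK M -> R}) (a : bA M) : bool :=
  (t < hor M * neps M)%N &&
  (0 < \sum_(k : bK M) \sum_(m : bM B)
         prior M k * q B k m * occ M k (beh_pol M B m) t s b * mu B m s a).

Definition Poff_num (M : bamdp) (B : behavior M) (t : nat) (s : bS M)
    (b : {ffun bK M -> R}) (a : bA M) (r : bRw M) (s' : bS M) : R :=
  \sum_(k : bK M) \sum_(m : bM B)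
     prior M k * q B k m * (Rdist M k s a r * Kstep M k t s a s' *
                            occ M k (beh_pol M B m) t s b).

Definition Poff (M : bamdp) (B : behavior M) (t : nat) (s : bS M)
    (b : {ffun bK M -> R}) (a : bA M) (r : bRw M) (s' : bS M) : R :=
  Poff_num M B t s b a r s' /
  \sum_(r' : bRw M) \sum_(s'' : bS M) Poff_num M B t s b a r' s''.

(* Meta-policies pi^+(a | s_t^+), with hyper-state (t, s, b). *)
Definition metapol (M : bamdp) :=
  nat -> bS M -> {ffun bK M -> R} -> bA M -> R.

Definition is_meta_policy (M : bamdp) (B : behavior M) (pi : metapol M) : Prop :=
  (forall t s b a, 0 <= pi t s b a) /\
  (forall t s b, (exists a, offline_occurs M B t s b a) ->
     \sum_(a : bA M) pi t s b a = 1).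

Definition batch_constrained (M : bamdp) (B : behavior M) (pi : metapol M)
    : Prop :=
  forall t s b a, ~~ offline_occurs M B t s b a -> pi t s b a = 0.

Fixpoint bamdp_prob (M : bamdp) (pi : metapol M) (pre c : seq (step M)) : R :=
  match c with
  | [::] => 1
  | ((a, r), s') :: c' =>
      let t := size pre in
      let s := cur_state M pre in
      let b := belief M pre in
      pi t s b a * Rplus M b s a r * Pplus M t b s a s' *
      bamdp_prob M pi (rcons pre ((a, r), s')) c'
  end.

Definition reach (M : bamdp) (pi : metapol M) (t : nat) (s : bS M)
    (b : {ffun bK M -> R}) : R :=
  \sum_(c : t.-tuple (step M) | (cur_state M c == s) && (belief M c == b))
     bamdp_prob M pi [::] c.

End BAMDP.

Arguments wf_behavior {R M}.
Arguments bS {R}.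
Arguments behavior {R}.
Arguments wf_bamdp {R}.
Arguments metapol {R}.
Arguments bA {R}.
Arguments bRw {R}.
Arguments bK {R}.
Arguments hor {R}.
Arguments neps {R}.
Arguments beh_pol {R M}.
Arguments offline_occurs {R M}.
Arguments Poff_num {R M}.
Arguments Poff {R M}.
Arguments is_meta_policy {R M}.
Arguments batch_constrained {R M}.
Arguments reach {R M}.
Arguments Pon {R M}.
Arguments bM {R M}.
Arguments mu {R M}.
Arguments q {R M}.

(** Two equally likely tasks [k : bool], horizon 2, one episode.  From the
    start state the action [a] deterministically leads to [Some a] with reward
    [false]; at [Some x] the reward is the task [k].  In task [k] the behaviour
    policy always plays [k], so in the offline data the state [Some x] is only
    visited in task [x], where the reward is [x] with probability one.  The
    first step carries no information about the task, so the BAMDP posterior at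
    [Some x] is still the uniform prior and the online reward is [x] only with
    probability 1/2.  Every meta-policy reaches some [Some x] with positive
    probability and must act there; the reward law does not depend on the
    action, so the shift occurs whether or not the meta-policy is batch
    constrained. *)
From HB Require Import structures.
From mathcomp Require Import all_boot all_order all_algebra.
From mathcomp Require Import reals.
From mathcomp Require Import ring lra.
Import Order.TTheory GRing.Theory Num.Theory.
Local Open Scope ring_scope.

Lemma big_option (T : Type) (idx : T) (op : Monoid.com_law idx) (I : finType)
    (F : option I -> T) :
  \big[op/idx]_(o : option I) F o = op (F None) (\big[op/idx]_(i : I) F (Some i)).
Proof.
rewrite (bigD1 None) //=; congr (op _ _).
rewrite (reindex_omap Some id) //=; last by case.
by apply: eq_bigl => i; rewrite eqxx.
Qed.

Lemma is_dist_indicator (R : realType) (T : finType) (x : T) :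
  @is_dist R T (fun y => (y == x)%:R).
Proof.
split=> [y|]; first exact: ler0n.
by rewrite (bigD1 x) //= eqxx big1 ?addr0 // => y /negbTE ->.
Qed.

Section BayesAdaptiveFacts.
Context {R : realType} {M : bamdp R} (wfM : wf_bamdp M).

Lemma prior_ge0 k : 0 <= prior R M k.
Proof. by case: wfM => _ [_ [_ [_ [[]]]]]. Qed.

Lemma Rdist_ge0 k s a r : 0 <= Rdist R M k s a r.
Proof. by case: wfM => _ [_ [_ [_ [_ [_ /(_ k s a) [ge0 _]]]]]]. Qed.

Lemma Kstep_ge0 k t s a s' : 0 <= Kstep R M k t s a s'.
Proof.
rewrite /Kstep; case: ifP => _; first exact: ler0n.
by case: wfM => _ [_ [_ [_ [_ [/(_ k s a) [ge0 _] _]]]]].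
Qed.

Lemma traj_prob_ge0 k pol pre c :
  (forall pre a, 0 <= pol pre a) -> 0 <= traj_prob R M k pol pre c.
Proof.
move=> pol_ge0; elim: c pre => [|[[a r] s'] c IHc] pre /=; first exact: ler01.
by rewrite !mulr_ge0 ?Rdist_ge0 ?Kstep_ge0.
Qed.

Lemma belief_ge0 c k : 0 <= belief R M c k.
Proof.
rewrite ffunE divr_ge0 ?sumr_ge0 // => [|k' _];
  by rewrite mulr_ge0 ?prior_ge0 ?traj_prob_ge0.
Qed.

Lemma bamdp_prob_ge0 (pi : metapol M) pre c :
  (forall t s b a, 0 <= pi t s b a) -> 0 <= bamdp_prob R M pi pre c.
Proof.
move=> pi_ge0; elim: c pre => [|[[a r] s'] c IHc] pre /=; first exact: ler01.
by rewrite !mulr_ge0 ?sumr_ge0 // => k _;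
  rewrite mulr_ge0 ?belief_ge0 ?Rdist_ge0 ?Kstep_ge0.
Qed.

Lemma occ_ge_traj_prob k pol t (c : t.-tuple _) :
  (forall pre a, 0 <= pol pre a) ->
  traj_prob R M k pol [::] c <= occ R M k pol t (cur_state R M c) (belief R M c).
Proof.
move=> pol_ge0; rewrite /occ (bigD1 c) ?eqxx //= lerDl.
by rewrite sumr_ge0 // => c' _; rewrite traj_prob_ge0.
Qed.

Lemma reach_ge_bamdp_prob (pi : metapol M) t (c : t.-tuple _) :
  (forall t s b a, 0 <= pi t s b a) ->
  bamdp_prob R M pi [::] c <= reach pi t (cur_state R M c) (belief R M c).
Proof.
move=> pi_ge0; rewrite /reach (bigD1 c) ?eqxx //= lerDl.
by rewrite sumr_ge0 // => c' _; rewrite bamdp_prob_ge0.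
Qed.

Lemma occ_start k pol :
  occ R M k pol 0 (s0 R M) (belief R M [::]) = 1.
Proof.
rewrite /occ (big_pred1 [tuple]) // => c.
by rewrite tuple0 /cur_state /= !eqxx.
Qed.

Lemma meta_policy_gt0 (B : behavior M) (pi : metapol M) t s b a :
  is_meta_policy B pi -> offline_occurs B t s b a ->
  exists a', 0 < pi t s b a'.
Proof.
move=> [pi_ge0 pi_sum1] off.
have sum_neq0 : \sum_a' pi t s b a' <> 0.
  by rewrite pi_sum1; [exact/eqP/oner_neq0 | exists a].
have [a' /andP[_ pi_a'_gt0]] := psumr_neq0P (fun a' _ => pi_ge0 t s b a') sum_neq0.
by exists a'.
Qed.

End BayesAdaptiveFacts.

Arguments meta_policy_gt0 {R M B pi t s b a}.

Section Example.
Variable R : realType.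

Definition Mex : bamdp R :=
  @BAMDP R (option bool) bool bool bool (fun r : bool => r%:R) 2 1 None
    (fun _ => 2^-1) (fun _ _ a s' => (s' == Some a)%:R)
    (fun k s _ r => if s is Some _ then (r == k)%:R else (r == false)%:R).

Definition Bex : behavior Mex :=
  @Behavior R Mex bool (fun m _ a => (a == m)%:R) (fun k m => (m == k)%:R).

Lemma wf_Mex : wf_bamdp Mex.
Proof.
do 2!split=> //; split.
  by case=> [] [] //= /eqP; rewrite ?oner_eq0 // eq_sym oner_eq0.
split; first by case=> /=; rewrite ?lexx ?ler01.
split; first by split=> [?|]; rewrite ?big_bool /=; lra.
split=> k s a; first exact: is_dist_indicator.
by case: s => [?|]; exact: is_dist_indicator.
Qed.

Lemma wf_Bex : wf_behavior Bex.
Proof. by split=> *; exact: is_dist_indicator. Qed.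

Definition b0 := belief R Mex [::].

Lemma b0E k : b0 k = 2^-1.
Proof. by rewrite ffunE /lik /= big_bool /=; field. Qed.

Lemma belief_first_step x : belief R Mex [:: ((x, false), Some x)] = b0.
Proof.
apply/ffunP => k; rewrite b0E ffunE /lik /= big_bool /Kstep /= !eqxx.
by case: x; case: k => /=; field.
Qed.

Lemma occ_off_task x k : k != x -> occ R Mex k (beh_pol Bex k) 1 (Some x) b0 = 0.
Proof.
move=> kx; rewrite /occ big1 // => -[[|[[a r] s'] [|]]] //= _ /andP[/eqP s'x _].
rewrite /cur_state /= in s'x; rewrite s'x /beh_pol /Kstep /=.
by case: x k a kx {s'x} => [] [] [] //= _; rewrite !(mul0r, mulr0).
Qed.

Lemma occ_task_gt0 x : 0 < occ R Mex x (beh_pol Bex x) 1 (Some x) b0.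
Proof.
rewrite -(belief_first_step x).
apply: lt_le_trans (occ_ge_traj_prob wf_Mex _ _ _ [tuple ((x, false), Some x)] _) => /=.
  by rewrite /beh_pol /Kstep /= !eqxx !mulr1 ltr01.
by move=> *; exact: ler0n.
Qed.

Lemma offline_occurs_start : offline_occurs Bex 0 None b0 true.
Proof. by rewrite /offline_occurs /= !big_bool /= !occ_start /=; lra. Qed.

Lemma offline_occurs_task x : offline_occurs Bex 1 (Some x) b0 x.
Proof.
rewrite /offline_occurs /= !big_bool /=.
by have := occ_task_gt0 x; case: x => /=; lra.
Qed.

Lemma Poff_task x a : Poff Bex 1 (Some x) b0 a x None = 1.
Proof.
rewrite /Poff /Poff_num /Kstep /= !big_bool !big_option !big_bool /=.
rewrite !(mul0r, mulr0, mul1r, mulr1, add0r, addr0).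
have := occ_task_gt0 x.
case: x;
  [rewrite (@occ_off_task true false) | rewrite (@occ_off_task false true)] => //=;
  by set o := occ _ _ _ _ _ _ _ => o_gt0; field; rewrite gt_eqF.
Qed.

Lemma Pon_task x a : Pon 1 b0 (Some x) a x None = 2^-1.
Proof.
by rewrite /Pon /Rplus /Pplus /Kstep /= !big_bool !b0E; case: x => /=; field.
Qed.

Lemma reach_task_gt0 (pi : metapol Mex) x :
  (forall t s b a, 0 <= pi t s b a) -> 0 < pi 0 None b0 x ->
  0 < reach pi 1 (Some x) b0.
Proof.
move=> pi_ge0 pi_x; rewrite -(belief_first_step x).
apply: lt_le_trans (reach_ge_bamdp_prob wf_Mex _ _ [tuple ((x, false), Some x)] pi_ge0).
by rewrite /= /Rplus /Pplus /Kstep /= !big_bool !b0E !eqxx /=; nra.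
Qed.

End Example.

Theorem theorem1 (R : realType) :
  exists (M : bamdp R) (B : behavior M),
    wf_bamdp M /\ wf_behavior B /\
    forall pi : metapol M,
      is_meta_policy B pi -> batch_constrained B pi ->
      exists (t : nat) (s : bS M) (b : {ffun bK M -> R}) (a : bA M),
        (t < hor M * neps M)%N /\ 0 < reach pi t s b /\ 0 < pi t s b a /\
        exists (r : bRw M) (s' : bS M), Poff B t s b a r s' != Pon t b s a r s'.
Proof.
exists (Mex R), (Bex R); split; [exact: wf_Mex | split; first exact: wf_Bex].
move=> pi meta_pi _.
have [x pi_x] := meta_policy_gt0 meta_pi (offline_occurs_start R).
have [a pi_a] := meta_policy_gt0 meta_pi (offline_occurs_task R x).
exists 1%N, (Some x), (b0 R), a; do !split=> //.
  by apply: reach_task_gt0 => //; case: meta_pi.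
exists x, None; rewrite Poff_task Pon_task; apply/eqP; lra.
Qed.
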